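(* Let $R$ be a GWNC ring. Then the Jacobson radical $J(R)$ is nil.
   Context: All rings are associative with identity. For a ring $S$, $U(S)$, ${\rm Nil}(S)$, ${\rm Id}(S)$ denote units, nilpotents, idempotents. $S$ is GWNC if every $a\in S\setminus U(S)$ can be written as $a=q+e$ or $a=q-e$ with $q\in{\rm Nil}(S)$, $e\in{\rm Id}(S)$. *)

From HB Require Import structures.
From mathcomp Require Import all_boot all_order all_algebra.
Set Implicit Arguments. Unset Strict Implicit. Unset Printing Implicit Defensive.
Import GRing.Theory.
Local Open Scope ring_scope.

Section Defs.
Variable R : pzRingType.

Definition is_unit (a : R) : Prop := exists b : R, a * b = 1 /\ b * a = 1.
Definition is_nilpotent (a : R) : Prop := exists n : nat, a ^+ n = 0.
Definition is_idempotent (e : R) : Prop := e * e = e.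

Definition GWNC : Prop :=
  forall a : R, ~ is_unit a ->
    exists q e : R, is_nilpotent q /\ is_idempotent e /\ (a = q + e \/ a = q - e).

Definition left_ideal (I : R -> Prop) : Prop :=
  I 0 /\ (forall x y, I x -> I y -> I (x + y)) /\ (forall r x, I x -> I (r * x)).

Definition maximal_left_ideal (M : R -> Prop) : Prop :=
  left_ideal M /\ ~ M 1 /\
  forall I : R -> Prop, left_ideal I -> (forall x, M x -> I x) ->
    (forall x, I x <-> M x) \/ (forall x, I x).

Definition jacobson (x : R) : Prop :=
  forall M : R -> Prop, maximal_left_ideal M -> M x.

Definition nil_set (S : R -> Prop) : Prop := forall x, S x -> is_nilpotent x.
End Defs.

(** For [x] in the Jacobson radical every [1 - r x] is left invertible, so
    the radical contains no nonzero idempotent and no unit (unless [R = 0]),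
    and it is a two-sided ideal.  Write a non-unit [x] of the radical as
    [x = q + e] or [x = q - e]; then [e] is congruent to the nilpotent [-q]
    or [q] modulo the radical.  Since [(y + p)^n - p^n] lies in the radical
    whenever [y] does, [e = e^n] lies in the radical for [n] large, hence
    [e = 0] and [x = q] is nilpotent. *)

From mathcomp Require Import all_boot all_order all_algebra.
From mathcomp Require Import boolp classical_sets.

Set Implicit Arguments. Unset Strict Implicit. Unset Printing Implicit Defensive.
Import GRing.Theory.
Local Open Scope classical_set_scope.
Local Open Scope ring_scope.

Section LeftIdeals.
Variable R : pzRingType.
Implicit Types (I M : set R) (x y r : R).

Lemma left_ideal0 I : left_ideal I -> I 0.
Proof. by case. Qed.

Lemma left_idealD I x y : left_ideal I -> I x -> I y -> I (x + y).
Proof. by case=> _ [+ _]; apply. Qed.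

Lemma left_idealMl I r x : left_ideal I -> I x -> I (r * x).
Proof. by case=> _ [_ +]; apply. Qed.

Lemma left_ideal_bigcup_chain (F : set (set R)) :
  F `<=` @left_ideal R -> total_on F subset -> F !=set0 ->
  left_ideal (\bigcup_(X in F) X).
Proof.
move=> Fideal Ftot [X0 FX0]; split.
  by exists X0 => //; apply: left_ideal0; apply: Fideal.
split=> [x y [X FX Xx] [Y FY Yy] | r x [X FX Xx]]; last first.
  by exists X => //; apply: left_idealMl Xx; apply: Fideal.
have [XY|YX] := Ftot _ _ FX FY.
- by exists Y => //; apply: left_idealD (XY _ Xx) Yy; exact: Fideal.
- by exists X => //; apply: left_idealD Xx (YX _ Yy); exact: Fideal.
Qed.

Lemma exists_maximal_left_ideal I : left_ideal I -> ~ I 1 ->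
  exists M, maximal_left_ideal M /\ I `<=` M.
Proof.
move=> Iideal nI1.
(* [set0] is allowed only because Zorn's lemma also bounds the empty chain. *)
pose P : set (set R) := fun A => A = set0 \/ [/\ left_ideal A, ~ A 1 & I `<=` A].
have P_nonempty A z : P A -> A z -> [/\ left_ideal A, ~ A 1 & I `<=` A].
  by case=> // ->.
have [M [PM Mmax]] : exists M, P M /\ forall B, M `<` B -> ~ P B.
  apply: Zorn_bigcup => F FP Ftot.
  have [[X [FX X0]]|Fempty] := pselect (exists X, F X /\ X 0); last first.
    left; apply/seteqP; split=> // x [X FX Xx]; apply: Fempty; exists X; split=> //.
    by case: (P_nonempty _ _ (FP _ FX) Xx) => /left_ideal0.
  pose F' := [set Y | F Y /\ Y !=set0].
  have -> : \bigcup_(Y in F) Y = \bigcup_(Y in F') Y.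
    apply/seteqP; split=> x [Y FY Yx]; exists Y => //; last by case: FY.
    by split=> //; exists x.
  have F'P Y : F' Y -> [/\ left_ideal Y, ~ Y 1 & I `<=` Y].
    by case=> FY [y Yy]; exact: P_nonempty (FP _ FY) Yy.
  right; split.
  - apply: left_ideal_bigcup_chain; last by exists X; split=> //; exists 0.
      by move=> Y /F'P[].
    by move=> Y Z [FY _] [FZ _]; exact: Ftot.
  - by move=> [Y /F'P[_ + _]].
  - have F'X : F' X by split=> //; exists 0.
    by move=> x Ix; exists X => //; have [_ _] := F'P X F'X; apply.
case: PM => [M0|[Mideal nM1 IM]].
  exfalso; apply: (Mmax I); last by right; split.
  by rewrite M0; split=> // /(_ 0 (left_ideal0 Iideal)).
exists M; split=> //; split=> //; split=> // J Jideal MJ.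
have [J1|nJ1] := pselect (J 1).
  by right=> x; rewrite -(mulr1 x); exact: left_idealMl.
have [JM|JneqM] := pselect (forall x, J x <-> M x); first by left.
exfalso; apply: (Mmax J); last by right; split=> // x /IM /MJ.
by split=> // JsubM; apply: JneqM => x; split; [exact: JsubM | exact: MJ].
Qed.

End LeftIdeals.

Section JacobsonRadical.
Variable R : pzRingType.
Implicit Types (a b e p q r s t x y : R).

Definition left_invertible a := exists s, s * a = 1.

Lemma left_invertible_1subMC a b :
  left_invertible (1 - a * b) -> left_invertible (1 - b * a).
Proof.
case=> s sK; exists (1 + b * s * a); rewrite mulrDl mul1r.
suff -> : b * s * a * (1 - b * a) = b * a by rewrite subrK.
have aC : a * (1 - b * a) = (1 - a * b) * a.
  by rewrite mulrBr mulrBl mulr1 mul1r mulrA.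
by rewrite -mulrA aC mulrA -(mulrA b) sK mulr1.
Qed.

Lemma jacobsonP x : jacobson x <-> forall r, left_invertible (1 - r * x).
Proof.
split=> [Jx r | xinv M [Mideal [nM1 Mmax]]].
  pose I : set R := fun y => exists s, y = s * (1 - r * x).
  have Iideal : left_ideal I.
    split; first by exists 0; rewrite mul0r.
    split=> [_ _ [s ->] [t ->] | a _ [s ->]]; first by exists (s + t); rewrite mulrDl.
    by exists (a * s); rewrite mulrA.
  have [[s sK]|nI1] := pselect (I 1); first by exists s.
  have [M [Mmax IM]] := exists_maximal_left_ideal Iideal nI1.
  have [Mideal [nM1 _]] := Mmax.
  exfalso; apply: nM1; rewrite -(subrK (r * x) 1).
  apply: left_idealD => //; first by apply: IM; exists 1; rewrite mul1r.
  by apply: left_idealMl (Jx M Mmax).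
have [//|nMx] := pselect (M x).
pose I : set R := fun y => exists m r, M m /\ y = m + r * x.
have Iideal : left_ideal I.
  split; first by exists 0, 0; rewrite mul0r addr0; split=> //; exact: left_ideal0.
  split=> [_ _ [m [r [Mm ->]]] [m' [r' [Mm' ->]]] | a _ [m [r [Mm ->]]]].
    exists (m + m'), (r + r'); split; first exact: left_idealD.
    by rewrite mulrDl addrACA.
  exists (a * m), (a * r); split; first exact: left_idealMl.
  by rewrite mulrDr mulrA.
have MI y : M y -> I y by exists y, 0; rewrite mul0r addr0.
have [IM|I1] := Mmax I Iideal MI.
  by case: nMx; apply/IM; exists 0, 1; rewrite mul1r add0r; split=> //; exact: left_ideal0.
have [m [r [Mm mE]]] := I1 1.
have [s sK] := xinv r.
by case: nM1; rewrite -sK -[1 - _]/(1 + - (r * x)) mE addrK; exact: left_idealMl.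
Qed.

Lemma jacobson0 : jacobson (0 : R).
Proof. by move=> M [Mideal _]; exact: left_ideal0. Qed.

Lemma jacobsonD x y : jacobson x -> jacobson y -> jacobson (x + y).
Proof. by move=> Jx Jy M maxM; apply: left_idealD (Jx M maxM) (Jy M maxM); case: maxM. Qed.

Lemma jacobsonMl r x : jacobson x -> jacobson (r * x).
Proof. by move=> Jx M maxM; apply: left_idealMl (Jx M maxM); case: maxM. Qed.

Lemma jacobsonMr x t : jacobson x -> jacobson (x * t).
Proof.
move=> /jacobsonP xinv; apply/jacobsonP => r.
by rewrite mulrA; apply: left_invertible_1subMC; rewrite mulrA; exact: xinv.
Qed.

Lemma jacobson_exprD_sub y p k : jacobson y -> jacobson ((y + p) ^+ k - p ^+ k).
Proof.
move=> Jy; elim: k => [|k IHk]; first by rewrite !expr0 subrr; exact: jacobson0.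
have -> : (y + p) ^+ k.+1 - p ^+ k.+1 = ((y + p) ^+ k - p ^+ k) * (y + p) + p ^+ k * y.
  by rewrite !exprSr mulrBl [p ^+ k * (y + p)]mulrDr opprD addrA addrAC subrK.
by apply: jacobsonD; [exact: jacobsonMr | exact: jacobsonMl].
Qed.

Lemma jacobson_idempotent_eq0 e : jacobson e -> is_idempotent e -> e = 0.
Proof.
move=> /jacobsonP/(_ 1)[s]; rewrite mul1r => sK ee.
by rewrite -[e]mul1r -sK -mulrA mulrBl mul1r ee subrr mulr0.
Qed.

Lemma jacobson_unit_eq0 x : jacobson x -> is_unit x -> x = 0.
Proof.
move=> /jacobsonP xinv [b [_ bx]]; have [s] := xinv b.
by rewrite bx subrr mulr0 => /esym one0; rewrite -[x]mulr1 one0 mulr0.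
Qed.

Lemma idempotent_eq0_mod_jacobson e y p :
  is_idempotent e -> jacobson y -> is_nilpotent p -> e = y + p -> e = 0.
Proof.
move=> ee Jy [n pn] eE; apply: jacobson_idempotent_eq0 (ee).
have eX k : e ^+ k.+1 = e by elim: k => [|k IHk]; rewrite ?expr1 // exprSr IHk ee.
by have := jacobson_exprD_sub p n.+1 Jy; rewrite [p ^+ _]exprSr pn mul0r subr0 -eE eX.
Qed.

Lemma nilpotentN q : is_nilpotent q -> is_nilpotent (- q).
Proof. by case=> n qn; exists n; rewrite exprNn qn mulr0. Qed.

End JacobsonRadical.

Theorem lemma2p4 (R : pzRingType) : GWNC R -> nil_set (@jacobson R).
Proof.
move=> GWNC_R x Jx.
have [xU|xNU] := pselect (is_unit x).
  by exists 1%N; rewrite expr1; exact: jacobson_unit_eq0.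
have [q [e [qN [ee [xE|xE]]]]] := GWNC_R x xNU.
- have e0 : e = 0.
    apply: idempotent_eq0_mod_jacobson ee Jx (nilpotentN qN) _.
    by rewrite xE addrAC subrr add0r.
  by rewrite xE e0 addr0.
- have e0 : e = 0.
    apply: idempotent_eq0_mod_jacobson ee (jacobsonMl (-1) Jx) qN _.
    by rewrite xE mulN1r opprB subrK.
  by rewrite xE e0 subr0.
Qed.
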